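(* Let $p>1$. For $\beta>-1$, $\beta\ne0$, let $\eta_1(\beta)\in(0,1)$ be the root of $\eta^\beta=\dfrac{1}{1+\beta(\eta+1)}$ and $$\psi_0(\beta,\eta)=\dfrac{(1+\eta^{\beta+1})^{1/\beta}}{(1+\eta)^{(\beta+1)/\beta}}+\dfrac{(\beta+1)^{(\beta+1)/\beta}}{\beta}\left[\dfrac1{1+\eta^{\beta+1}}-\dfrac1{1+\eta}\right].$$ Then $$\max_{0\le\eta\le\eta_1(1/(p-1))}\psi_0\!\left(\frac1{p-1},\eta\right)=\max_{0\le\eta\le\eta_1(-1/p)}\psi_0\!\left(-\frac1p,\eta\right).$$ *)

From HB Require Import structures.
From mathcomp Require Import all_boot all_order all_algebra.
From mathcomp Require Import all_classical all_reals all_analysis.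
Set Implicit Arguments. Unset Strict Implicit. Unset Printing Implicit Defensive.
Import Order.TTheory GRing.Theory Num.Theory.
Local Open Scope ring_scope.

Definition psi0 (R : realType) (b eta : R) : R :=
  (1 + eta `^ (b + 1)) `^ (b^-1) / (1 + eta) `^ ((b + 1) / b)
  + (b + 1) `^ ((b + 1) / b) / b * ((1 + eta `^ (b + 1))^-1 - (1 + eta)^-1).

Definition is_eta1 (R : realType) (b e : R) : Prop :=
  0 < e < 1 /\ e `^ b = (1 + b * (e + 1))^-1.

Definition is_max_on (R : realType) (f : R -> R) (a b M : R) : Prop :=
  (exists x, a <= x <= b /\ f x = M) /\ (forall x, a <= x <= b -> f x <= M).

From HB Require Import structures.
From mathcomp Require Import all_boot all_order all_algebra.
From mathcomp Require Import all_classical all_reals all_analysis.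
From mathcomp Require Import ring lra.
Import Order.TTheory GRing.Theory Num.Theory numFieldNormedType.Exports.
Local Open Scope ring_scope.

(* The exponents 1/(p-1) and -1/p are exchanged by the involution
   b |-> -b/(b+1), and the substitution eta = xi^(b+1) intertwines the two
   problems: psi0(-b/(b+1), xi^(b+1)) = psi0(b, xi) and
   eta1(-b/(b+1)) = eta1(b)^(b+1).  Hence xi |-> xi^(b+1) maps [0, eta1(b)]
   onto [0, eta1(-b/(b+1))] and carries the values of one function onto the
   values of the other; the maximum exists by the extreme value theorem. *)

Set Implicit Arguments.
Unset Strict Implicit.

Section PowR.
Variable R : realType.
Implicit Types (a x : R).

Lemma powRK a x : a != 0 -> 0 <= x -> (x `^ a) `^ a^-1 = x.
Proof. by move=> a0 x0; rewrite -powRrM mulfV // powRr1. Qed.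

Lemma powRVK a x : a != 0 -> 0 <= x -> (x `^ a^-1) `^ a = x.
Proof. by move=> a0 x0; rewrite -powRrM mulVf // powRr1. Qed.

Lemma inv_powR a x : 0 <= a -> (a^-1) `^ x = (a `^ x)^-1.
Proof. by move=> a0; rewrite -powR_inv1 // -powRrM mulN1r powRN. Qed.
End PowR.

Section DualExponent.
Variable R : realType.
Implicit Types (b e x : R).

Definition dual_exp b := - b / (b + 1).

Lemma dual_expD1 b : b + 1 != 0 -> dual_exp b + 1 = (b + 1)^-1.
Proof. by move=> b1; rewrite /dual_exp; field. Qed.

Lemma dual_exp_gtN1 b : -1 < b -> -1 < dual_exp b.
Proof.
move=> b1; rewrite -subr_gt0 opprK dual_expD1 ?invr_gt0; lra.
Qed.

Lemma dual_exp_eq0 b : -1 < b -> (dual_exp b == 0) = (b == 0).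
Proof.
by move=> b1; rewrite /dual_exp mulf_eq0 invr_eq0 oppr_eq0 orb_idr // => /eqP; lra.
Qed.

Lemma dual_expK b : -1 < b -> dual_exp (dual_exp b) = b.
Proof.
move=> b1; have b10 : b + 1 != 0 by rewrite gt_eqF //; lra.
by rewrite {1}/dual_exp dual_expD1 // /dual_exp; field.
Qed.

Lemma psi0_dual_exp b x : -1 < b -> b != 0 -> 0 <= x ->
  psi0 (dual_exp b) (x `^ (b + 1)) = psi0 b x.
Proof.
move=> b1 b0 x0; rewrite /psi0; set q := b + 1.
have q0 : 0 < q by rewrite /q; lra.
have qn0 : q != 0 by rewrite gt_eqF.
have -> : (dual_exp b + 1) / dual_exp b = - b^-1.
  by rewrite dual_expD1 // /dual_exp -/q; field; rewrite b0 qn0.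
have -> : (dual_exp b)^-1 = - (q / b).
  by rewrite /dual_exp -/q; field; rewrite b0 qn0.
have -> : q / b = b^-1 + 1 by rewrite /q; field.
rewrite dual_expD1 // powRK ?powR_ge0 // !powRN inv_powR ?(ltW q0) // !invrK.
rewrite [q `^ _]powRD ?powRr1 ?(ltW q0) ?qn0 ?implybT //.
have u0 : 0 < 1 + x `^ q by have := powR_ge0 x q; lra.
have v0 : 0 < 1 + x by lra.
rewrite /q; field.
by rewrite b0 !gt_eqF ?powR_gt0.
Qed.

Lemma is_eta1_mulE b e : is_eta1 b e -> e `^ b * (1 + b * (e + 1)) = 1.
Proof.
case=> /andP[e0 _] ebE; have eb0 : e `^ b != 0 by rewrite gt_eqF ?powR_gt0.
by rewrite ebE mulVf // -invr_eq0 -ebE.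
Qed.

Lemma is_eta1_unique b e e' : 0 < b -> is_eta1 b e -> is_eta1 b e' -> e = e'.
Proof.
move=> b0 he he'.
have incr x y : 0 < x -> x < y ->
    x `^ b * (1 + b * (x + 1)) < y `^ b * (1 + b * (y + 1)).
  move=> x0 xy; apply: ltr_pM; rewrite ?powR_ge0 //.
  - have : 0 < b * (x + 1) by apply: mulr_gt0; lra.
    lra.
  - by apply: gt0_ltr_powR; rewrite ?nnegrE //; lra.
  - by rewrite ltrD2l ltr_pM2l // ltrD2r.
have [[/andP[e0 _] _] [/andP[e'0 _] _]] := (he, he').
have [/(incr _ _ e0)|/(incr _ _ e'0)|//] := ltgtP e e';
  by rewrite !is_eta1_mulE // ltxx.
Qed.

Lemma is_eta1_dual_exp b e : -1 < b -> b != 0 ->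
  is_eta1 b e -> is_eta1 (dual_exp b) (e `^ (b + 1)).
Proof.
move=> b1 b0 he; have := is_eta1_mulE he; case: he => /andP[e0 e1] ebE ebD.
have q0 : 0 < b + 1 by lra.
have D0 : 1 + b * (e + 1) != 0.
  by apply/eqP => D0; move: ebD; rewrite D0 mulr0 => /eqP; rewrite eq_sym oner_eq0.
split.
  have := @gt0_ltr_powR _ _ q0 e 1; rewrite powR1 powR_gt0 //=.
  by apply; rewrite ?nnegrE //; lra.
have eqE : e `^ (b + 1) = e / (1 + b * (e + 1)).
  by rewrite powRD ?powRr1 ?(ltW e0) ?gt_eqF ?implybT // ebE mulrC.
have qd : (b + 1) * dual_exp b = - b by rewrite /dual_exp; field; rewrite gt_eqF.
rewrite -powRrM qd powRN ebE invrK eqE /dual_exp.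
apply: (@invr_inj _); rewrite invrK; field.
by rewrite D0 gt_eqF.
Qed.

Lemma is_eta1_dual_expE b e e' : 0 < b ->
  is_eta1 b e -> is_eta1 (dual_exp b) e' -> e' = e `^ (b + 1).
Proof.
move=> b0 he he'; have b1 : -1 < b by lra.
have qn0 : b + 1 != 0 by rewrite gt_eqF //; lra.
have db0 : dual_exp b != 0 by rewrite dual_exp_eq0 // gt_eqF.
have := is_eta1_dual_exp (dual_exp_gtN1 b1) db0 he'.
rewrite dual_expK // dual_expD1 // => he''.
case: he' => /andP[e'0 _] _.
by rewrite (is_eta1_unique b0 he he'') powRVK // ltW.
Qed.
End DualExponent.

Section Continuity.
Variable R : realType.
Implicit Types (a b c : R).

Lemma continuous_powR a c : 0 < a -> {for a, continuous (fun x : R => x `^ c)}.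
Proof.
move=> a0; apply: differentiable_continuous; apply/derivable1_diffP.
by apply: derivable_powR; rewrite in_itv /= a0.
Qed.

Lemma continuous_comp_powR (f : R -> R) a c : 0 < f a ->
  {for a, continuous f} -> {for a, continuous (fun x => f x `^ c)}.
Proof. by move=> fa0 fc; apply: continuous_comp fc (continuous_powR fa0). Qed.

Lemma continuous_powR_max0 c : 0 < c -> continuous (fun x : R => Num.max x 0 `^ c).
Proof.
move=> c0 x; have [x0|x0|->] := ltgtP x 0.
- rewrite /continuous_at (max_r (ltW x0)) powR0 ?gt_eqF //.
  apply: cvg_near_cst; near=> y.
  suff y0 : y < 0 by rewrite (max_r (ltW y0)) powR0 ?gt_eqF.
  near: y; exact: lt_nbhsl.
- rewrite /continuous_at (max_l (ltW x0)).
  apply: cvg_trans _ (continuous_powR x0); apply: near_eq_cvg.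
  by near=> y; rewrite max_l //; apply/ltW; near: y; exact: lt_nbhsr.
- apply/left_right_continuousP; rewrite maxxx powR0 ?gt_eqF //; split.
    apply: cvg_near_cst; near=> y; rewrite max_r ?powR0 ?gt_eqF //;
      by apply/ltW; near: y; exact: nbhs_left_lt.
  apply: cvg_trans (powR_cvg0 c0); apply: near_eq_cvg.
  by near=> y; rewrite max_l //; apply/ltW; near: y; exact: nbhs_right_gt.
Unshelve. all: by end_near.
Qed.

Lemma continuous_psi0_max0 b : -1 < b ->
  continuous (fun x : R => psi0 b (Num.max x 0)).
Proof.
move=> b1 x; have q0 : 0 < b + 1 by lra.
pose u (y : R) := 1 + Num.max y 0 `^ (b + 1).
pose v (y : R) := 1 + Num.max y 0.
have u0 : 0 < u x by have := powR_ge0 (Num.max x 0) (b + 1); rewrite /u; lra.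
have v0 : 0 < v x.
  have : 0 <= Num.max x 0 by rewrite le_max lexx orbT.
  rewrite /v; lra.
have uc : {for x, continuous u}.
  by apply: continuousD; [exact: cvg_cst | exact: continuous_powR_max0].
have vc : {for x, continuous v}.
  apply: continuousD; first exact: cvg_cst.
  exact: (@continuous_max R R id (fun=> 0) x cvg_id (cvg_cst _)).
have invc (w : R -> R) : 0 < w x -> {for x, continuous w} ->
    {for x, continuous (fun y => (w y)^-1)}.
  by move=> w0; apply: continuousV; rewrite gt_eqF.
have pu := continuous_comp_powR (c := b^-1) u0 uc.
have pv := continuous_comp_powR (c := (b + 1) / b) v0 vc.
have pv0 : 0 < v x `^ ((b + 1) / b) by exact: powR_gt0.
exact: continuousD (continuousM pu (invc _ pv0 pv))
  (continuousM (cvg_cst _) (continuousB (invc _ u0 uc) (invc _ v0 vc))).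
Qed.
End Continuity.

Section Maximum.
Variable R : realType.

Lemma is_max_on_reparam (f g h : R -> R) a b c d M :
  is_max_on f a b M ->
  (forall x, a <= x <= b -> c <= h x <= d) ->
  (forall y, c <= y <= d -> exists2 x, a <= x <= b & h x = y) ->
  (forall x, a <= x <= b -> g (h x) = f x) ->
  is_max_on g c d M.
Proof.
move=> [[x0 [x0ab <-]] fM] hab hcd gh; split.
  by exists (h x0); rewrite gh //; split => //; exact: hab.
by move=> y /hcd[x xab <-]; rewrite gh //; exact: fM.
Qed.

Lemma psi0_has_max_on (b e : R) : -1 < b -> 0 <= e ->
  exists M, is_max_on (psi0 b) 0 e M.
Proof.
(* [psi0 b] is continuous only on [0, +oo[: precomposing with [max _ 0]
   avoids the junk values of [powR] at negative arguments. *)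
move=> b1 e0; pose F (x : R) := psi0 b (Num.max x 0).
have FE : {in `[0, e]%classic, F =1 psi0 b}.
  by move=> x; rewrite inE /= in_itv /= => /andP[x0 _]; rewrite /F max_l.
have Fc : {within `[0, e], continuous (psi0 b)}%classic.
  apply: (subspace_eq_continuous FE).
  exact: continuous_subspaceT (continuous_psi0_max0 b1).
have [c c0e cmax] := EVT_max e0 Fc.
exists (psi0 b c); split; first by exists c; move: c0e; rewrite in_itv.
by move=> x x0e; apply: cmax; rewrite in_itv.
Qed.

Lemma is_max_on_psi0_dual_exp (b e M : R) : -1 < b -> b != 0 -> 0 <= e ->
  is_max_on (psi0 b) 0 e M -> is_max_on (psi0 (dual_exp b)) 0 (e `^ (b + 1)) M.
Proof.
move=> b1 b0 e0 psiM; have q0 : 0 < b + 1 by lra.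
have qn0 : b + 1 != 0 by rewrite gt_eqF.
apply: (is_max_on_reparam (h := fun x => x `^ (b + 1)) psiM).
- by move=> x /andP[x0 xe]; rewrite powR_ge0 ge0_ler_powR ?nnegrE ?(ltW q0).
- move=> y /andP[y0 ye]; exists (y `^ (b + 1)^-1); last by rewrite powRVK.
  rewrite powR_ge0 -(powRK qn0 e0).
  by rewrite ge0_ler_powR ?nnegrE ?invr_ge0 ?powR_ge0 ?(ltW q0).
- by move=> x /andP[x0 _]; rewrite psi0_dual_exp.
Qed.
End Maximum.

Unset Implicit Arguments.

Theorem corollary2p5 (R : realType) (p : R) (hp : 1 < p) (e1 e2 : R)
  (he1 : is_eta1 (1 / (p - 1)) e1) (he2 : is_eta1 (- (1 / p)) e2) :
  exists M : R,
    is_max_on (psi0 (1 / (p - 1))) 0 e1 M /\ is_max_on (psi0 (- (1 / p))) 0 e2 M.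
Proof.
set b := 1 / (p - 1) in he1 *.
have b0 : 0 < b by rewrite divr_gt0 //; lra.
have bdual : - (1 / p) = dual_exp b.
  by rewrite /dual_exp /b; field; rewrite !gt_eqF //; lra.
rewrite bdual in he2 *.
have [/andP[e10 _] _] := he1.
have b1 : -1 < b by lra.
have [M psiM] := psi0_has_max_on b1 (ltW e10).
exists M; split => //.
rewrite (is_eta1_dual_expE b0 he1 he2).
exact: is_max_on_psi0_dual_exp b1 (lt0r_neq0 b0) (ltW e10) psiM.
Qed.
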